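(* Let $\mathcal C$ be a small abelian (or, more generally, Quillen exact) category with a tensor product that is exact in each variable and has a tensor identity $e$. Suppose either that the tensor product is commutative, or that there is an object $c\in\mathcal C$ such that no proper thick subcategory of $\mathcal C$ contains $c$. Then the set $L_{\mathrm{thick}}(\mathcal C)$ of thick tensor ideals of $\mathcal C$, ordered by inclusion and with product $(\mathcal D_1,\mathcal D_2)\mapsto\langle\mathcal D_1\mathcal D_2\rangle$, is an ideal lattice. Moreover, a thick tensor ideal is compact in this lattice if and only if it is of the form $\langle x\rangle$ for a single object $x$.
   Context: A tensor product on an additive category $\mathcal C$ is an additive bifunctor $\otimes\colon\mathcal C\times\mathcal C\to\mathcal C$ with a natural associativity isomorphism; a tensor identity $e$ comes with natural isomorphisms $x\otimes e\cong x\cong e\otimes x$ satisfying the pentagon and triangle axioms. A subcategory $\mathcal D$ is thick if for every exact sequence $0\to x'\to x\to x''\to0$, $x\in\mathcal D$ iff $x',x''\in\mathcal D$. A tensor ideal is a full additive subcategory $\mathcal D$ with $x\otimes y\in\mathcal D$ whenever $x\in\mathcal D$ or $y\in\mathcal D$. $\langle\mathcal D_0\rangle$ denotes the smallest thick tensor ideal containing a class $\mathcal D_0$; $\mathcal D_1\mathcal D_2$ denotes the class of finite coproducts of objects $x\otimes y$ with $x\in\mathcal D_1,y\in\mathcal D_2$ (up to isomorphism). An ideal lattice is a poset $(L,\leq)$ with an associative multiplication such that: (L1) $L$ is a complete lattice; (L2) every element is a supremum of compact elements ($a$ is compact if $a\leq\sup A$ implies $a\leq\sup A'$ for some finite $A'\subseteq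 A$); (L3) multiplication distributes over binary joins on both sides; (L4) $1=\sup L$ is compact and is a two-sided identity; (L5) products of compact elements are compact. *)

From HB Require Import structures.
From mathcomp Require Import all_boot all_algebra.
From Stdlib Require Import List.
Set Implicit Arguments.
Unset Strict Implicit.
Unset Printing Implicit Defensive.
Import GRing.Theory.
Local Open Scope ring_scope.

Record PreaddCat := {
  Ob : Type;
  Hom : Ob -> Ob -> zmodType;
  idm : forall a, Hom a a;
  comp : forall a b c, Hom b c -> Hom a b -> Hom a c;
  compA : forall a b c d (f : Hom c d) (g : Hom b c) (h : Hom a b),
      comp f (comp g h) = comp (comp f g) h;
  comp1m : forall a b (f : Hom a b), comp (idm b) f = f;
  compm1 : forall a b (f : Hom a b), comp f (idm a) = f;
  compDl : forall a b c (f f' : Hom b c) (g : Hom a b),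
      comp (f + f') g = comp f g + comp f' g;
  compDr : forall a b c (f : Hom b c) (g g' : Hom a b),
      comp f (g + g') = comp f g + comp f g'
}.
Arguments Hom {_} _ _.
Arguments idm {_} _.
Arguments comp {_ _ _ _} _ _.

Section Cat.
Variable C : PreaddCat.

Definition is_zero (z : Ob C) : Prop :=
  forall a : Ob C, (forall f : Hom z a, f = 0) /\ (forall f : Hom a z, f = 0).

Definition is_biprod (a b z : Ob C) : Prop :=
  exists (i1 : Hom a z) (i2 : Hom b z) (p1 : Hom z a) (p2 : Hom z b),
    [/\ comp p1 i1 = idm a, comp p2 i2 = idm b, comp p1 i2 = 0,
        comp p2 i1 = 0 & comp i1 p1 + comp i2 p2 = idm z].

Definition additive : Prop :=
  (exists z, is_zero z) /\ (forall a b, exists z, is_biprod a b z).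

Definition is_iso (a b : Ob C) (f : Hom a b) : Prop :=
  exists g : Hom b a, comp g f = idm a /\ comp f g = idm b.

Definition iso_obj (a b : Ob C) : Prop := exists f : Hom a b, is_iso f.

Definition is_kernel (k0 a b : Ob C) (k : Hom k0 a) (f : Hom a b) : Prop :=
  comp f k = 0 /\
  forall x (g : Hom x a), comp f g = 0 -> exists! h : Hom x k0, comp k h = g.

Definition is_cokernel (a b c0 : Ob C) (c : Hom b c0) (f : Hom a b) : Prop :=
  comp c f = 0 /\
  forall x (g : Hom b x), comp g f = 0 -> exists! h : Hom c0 x, comp h c = g.

Definition kc_pair (x' x x'' : Ob C) (i : Hom x' x) (p : Hom x x'') : Prop :=
  is_kernel i p /\ is_cokernel p i.

Definition is_pushout (a b c d : Ob C) (i : Hom a b) (f : Hom a c)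
    (i' : Hom c d) (f' : Hom b d) : Prop :=
  comp f' i = comp i' f /\
  forall x (g : Hom b x) (h : Hom c x), comp g i = comp h f ->
    exists! u : Hom d x, comp u f' = g /\ comp u i' = h.

Definition is_pullback (a b c d : Ob C) (p : Hom b c) (f : Hom a c)
    (p' : Hom d a) (f' : Hom d b) : Prop :=
  comp p f' = comp f p' /\
  forall x (g : Hom x b) (h : Hom x a), comp p g = comp f h ->
    exists! u : Hom x d, comp f' u = g /\ comp p' u = h.

(* A class of "conflations" (short exact sequences 0 -> x' -> x -> x'' -> 0) *)
Definition conflations := forall x' x x'' : Ob C, Hom x' x -> Hom x x'' -> Prop.

Section Exact.
Variable E : conflations.

Definition adm_mono (a b : Ob C) (i : Hom a b) : Prop :=
  exists (c : Ob C) (p : Hom b c), E i p.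
Definition adm_epi (b c : Ob C) (p : Hom b c) : Prop :=
  exists (a : Ob C) (i : Hom a b), E i p.

(* Quillen exact structure (Buehler's axioms) on an additive category *)
Definition exact_structure : Prop :=
  [/\ (forall x' x x'' (i : Hom x' x) (p : Hom x x''), E i p -> kc_pair i p),
      (forall x' x x'' (i : Hom x' x) (p : Hom x x'') y' y y''
              (j : Hom y' y) (q : Hom y y'')
              (u : Hom x' y') (v : Hom x y) (w : Hom x'' y''),
          E i p -> is_iso u -> is_iso v -> is_iso w ->
          comp v i = comp j u -> comp w p = comp q v -> E j q),
      (forall a, adm_mono (idm a)) /\ (forall a, adm_epi (idm a)),
      (forall a b c (i : Hom a b) (j : Hom b c),
          adm_mono i -> adm_mono j -> adm_mono (comp j i)) /\
      (forall a b c (p : Hom a b) (q : Hom b c),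
          adm_epi p -> adm_epi q -> adm_epi (comp q p)) &
      (forall a b (i : Hom a b), adm_mono i -> forall c (f : Hom a c),
          exists d (i' : Hom c d) (f' : Hom b d),
            is_pushout i f i' f' /\ adm_mono i') /\
      (forall b c (p : Hom b c), adm_epi p -> forall a (f : Hom a c),
          exists d (p' : Hom d a) (f' : Hom d b),
            is_pullback p f p' f' /\ adm_epi p')].

End Exact.

Record Tensor := {
  tob : Ob C -> Ob C -> Ob C;
  tom : forall a a' b b', Hom a a' -> Hom b b' -> Hom (tob a b) (tob a' b');
  tom_id : forall a b, tom (idm a) (idm b) = idm (tob a b);
  tom_comp : forall a a' a'' b b' b'' (f : Hom a' a'') (f' : Hom a a')
      (g : Hom b' b'') (g' : Hom b b'),
      tom (comp f f') (comp g g') = comp (tom f g) (tom f' g');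
  tom_addl : forall a a' b b' (f f' : Hom a a') (g : Hom b b'),
      tom (f + f') g = tom f g + tom f' g;
  tom_addr : forall a a' b b' (f : Hom a a') (g g' : Hom b b'),
      tom f (g + g') = tom f g + tom f g';
  assoc : forall a b c, Hom (tob (tob a b) c) (tob a (tob b c));
  assoc_iso : forall a b c, is_iso (assoc a b c);
  assoc_nat : forall a a' b b' c c' (f : Hom a a') (g : Hom b b') (h : Hom c c'),
      comp (assoc a' b' c') (tom (tom f g) h) =
      comp (tom f (tom g h)) (assoc a b c)
}.

Section TensorDefs.
Variable T : Tensor.
Local Notation "a ⊗ b" := (tob T a b) (at level 40, left associativity).
Local Notation "f ⊗m g" := (tom T f g) (at level 40, left associativity).

Definition tensor_unit (e : Ob C) : Prop :=
  exists (lu : forall x, Hom (e ⊗ x) x) (ru : forall x, Hom (x ⊗ e) x),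
  [/\ (forall x, is_iso (lu x)) /\ (forall x, is_iso (ru x)),
      (forall x y (f : Hom x y), comp f (lu x) = comp (lu y) (idm e ⊗m f)) /\
      (forall x y (f : Hom x y), comp f (ru x) = comp (ru y) (f ⊗m idm e)),
      (forall a b c d,
         comp (assoc T a b (c ⊗ d)) (assoc T (a ⊗ b) c d) =
         comp (idm a ⊗m assoc T b c d)
              (comp (assoc T a (b ⊗ c) d) (assoc T a b c ⊗m idm d))) &
      (forall a b, comp (idm a ⊗m lu b) (assoc T a e b) = ru a ⊗m idm b)].

Definition tensor_commutative : Prop :=
  exists g : forall x y, Hom (x ⊗ y) (y ⊗ x),
    (forall x y, is_iso (g x y)) /\
    (forall x x' y y' (f : Hom x x') (h : Hom y y'),
        comp (g x' y') (f ⊗m h) = comp (h ⊗m f) (g x y)).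

Variable E : conflations.

Definition tensor_exact : Prop :=
  forall x' x x'' (i : Hom x' x) (p : Hom x x''), E i p ->
    forall c, E (i ⊗m idm c) (p ⊗m idm c) /\ E (idm c ⊗m i) (idm c ⊗m p).

(* subcategories are given by predicates on objects (full subcategories) *)
Definition thick (D : Ob C -> Prop) : Prop :=
  forall x' x x'' (i : Hom x' x) (p : Hom x x''), E i p ->
    (D x <-> D x' /\ D x'').

Definition additive_subcat (D : Ob C -> Prop) : Prop :=
  (exists z, is_zero z /\ D z) /\
  (forall a b z, D a -> D b -> is_biprod a b z -> D z).

Definition tensor_ideal (D : Ob C -> Prop) : Prop :=
  additive_subcat D /\ (forall x y, D x \/ D y -> D (x ⊗ y)).

Definition thick_tensor_ideal (D : Ob C -> Prop) : Prop :=
  thick D /\ tensor_ideal D.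

(* <D0>: the smallest thick tensor ideal containing D0 *)
Definition gen (D0 : Ob C -> Prop) : Ob C -> Prop :=
  fun x => forall D, thick_tensor_ideal D -> (forall y, D0 y -> D y) -> D x.

Inductive fincoprod (S : Ob C -> Prop) : Ob C -> Prop :=
| fc_zero z : is_zero z -> fincoprod S z
| fc_sum a b z : S a -> fincoprod S b -> is_biprod a b z -> fincoprod S z.

Definition prodcls (D1 D2 : Ob C -> Prop) : Ob C -> Prop :=
  fincoprod (fun w => exists x y, [/\ D1 x, D2 y & iso_obj w (x ⊗ y)]).

Definition incl (D1 D2 : Ob C -> Prop) : Prop := forall x, D1 x -> D2 x.

Definition tprod (D1 D2 : Ob C -> Prop) : Ob C -> Prop := gen (prodcls D1 D2).

End TensorDefs.
End Cat.

(* Ideal lattices, on the carrier {a : X | P a}.                       *)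
Section IdealLattice.
Variables (X : Type) (P : X -> Prop) (le : X -> X -> Prop) (mul : X -> X -> X).

Definition is_sup_in (A : X -> Prop) (s : X) : Prop :=
  [/\ P s, (forall a, A a -> le a s) &
      (forall u, P u -> (forall a, A a -> le a u) -> le s u)].

Definition compact_in (a : X) : Prop :=
  P a /\
  forall (A : X -> Prop) s, (forall x, A x -> P x) -> is_sup_in A s -> le a s ->
    exists l : list X, (forall x, In x l -> A x) /\
      exists s', is_sup_in (fun x => In x l) s' /\ le a s'.

Definition ideal_lattice_on : Prop :=
  ((forall a b, P a -> P b -> P (mul a b)) /\
   (forall a b c, P a -> P b -> P c -> mul (mul a b) c = mul a (mul b c))) /\
  [/\ (forall a, P a -> le a a),
      (forall a b c, P a -> P b -> P c -> le a b -> le b c -> le a c) &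
      (forall a b, P a -> P b -> le a b -> le b a -> a = b)] /\
  (forall A, (forall x, A x -> P x) -> exists s, is_sup_in A s) /\
  (forall a, P a -> is_sup_in (fun c => compact_in c /\ le c a) a) /\
  (forall a b c j, P a -> P b -> P c ->
      is_sup_in (fun x => x = b \/ x = c) j ->
      is_sup_in (fun x => x = mul a b \/ x = mul a c) (mul a j) /\
      is_sup_in (fun x => x = mul b a \/ x = mul c a) (mul j a)) /\
  (exists t, [/\ is_sup_in P t, compact_in t &
                 forall a, P a -> mul t a = a /\ mul a t = a]) /\
  (forall a b, compact_in a -> compact_in b -> compact_in (mul a b)).

End IdealLattice.

(* Thick tensor ideals are closed under intersections, so they form a complete
   lattice whose join is the ideal generated by the union.  Split sequences are
   conflations, so thick subcategories are closed under isomorphisms and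
   biproducts; hence finitely many generators can be replaced by their
   biproduct, and the compact ideals are exactly the principal ones <x>.
   Associativity and distributivity of the product come from one observation:
   for a thick tensor ideal I and a class A closed under tensoring, the objects
   x with x ⊗ A ⊆ I (or A ⊗ x ⊆ I) again form a thick tensor ideal.  The same
   device shows that <x><y> is principal: it is generated by x ⊗ y when the
   tensor product is commutative, and by x ⊗ (c ⊗ y) otherwise, because the
   objects w with x ⊗ (w ⊗ y) ∈ <x ⊗ (c ⊗ y)> form a thick subcategory
   containing c.  The unit e generates the top ideal. *)

From mathcomp Require Import all_boot all_algebra.
From Stdlib Require Import List FunctionalExtensionality PropExtensionality.
Import GRing.Theory.
Set Implicit Arguments.
Unset Strict Implicit.
Unset Printing Implicit Defensive.
Local Open Scope ring_scope.

Section Preadditive.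
Variable C : PreaddCat.
Implicit Types a b c d x z : Ob C.

Lemma comp0m a b c (f : Hom a b) : comp (0 : Hom b c) f = 0.
Proof. by apply: (@addrI _ (comp 0 f)); rewrite addr0 -compDl addr0. Qed.

Lemma compm0 a b c (f : Hom b c) : comp f (0 : Hom a b) = 0.
Proof. by apply: (@addrI _ (comp f 0)); rewrite addr0 -compDr addr0. Qed.

Lemma is_iso_idm a : is_iso (idm a).
Proof. by exists (idm a); rewrite comp1m. Qed.

Lemma iso_obj_refl a : iso_obj a a.
Proof. by exists (idm a); apply: is_iso_idm. Qed.

Lemma iso_obj_sym a b : iso_obj a b -> iso_obj b a.
Proof. by case=> f [g [gf fg]]; exists g; exists f. Qed.

Lemma iso_obj_trans a b c : iso_obj a b -> iso_obj b c -> iso_obj a c.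
Proof.
case=> f [g [gf fg]] [f' [g' [gf' fg']]].
exists (comp f' f), (comp g g'); split.
- by rewrite compA -(compA g) gf' compm1 gf.
- by rewrite compA -(compA f') fg compm1 fg'.
Qed.

Lemma iso_obj_zero z z' : is_zero z -> is_zero z' -> iso_obj z z'.
Proof.
move=> z0 z'0; exists 0, 0; split.
- by case: (z0 z) => H _; rewrite (H (comp 0 0)) (H (idm z)).
- by case: (z'0 z') => H _; rewrite (H (comp 0 0)) (H (idm z')).
Qed.

Lemma is_biprod_zero a z : is_zero z -> is_biprod a z a.
Proof.
move=> z0; exists (idm a), 0, (idm a), 0; split.
- by rewrite comp1m.
- by case: (z0 z) => H _; rewrite (H (comp 0 0)) (H (idm z)).
- by rewrite comp1m.
- by rewrite comp0m.
- by rewrite comp1m compm0 addr0.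
Qed.

Lemma cokernel_ext a b c (q : Hom b c) (f : Hom a b) x (u u' : Hom c x) :
  is_cokernel q f -> comp u q = comp u' q -> u = u'.
Proof.
move=> [qf0 cokq] uq.
have [h [_ hU]] : exists! h, comp h q = comp u q.
  by apply: cokq; rewrite -compA qf0 compm0.
by rewrite -(hU u) // (hU u').
Qed.

Lemma pushout_ext a b c d (i : Hom a b) (f : Hom a c) (i' : Hom c d)
    (f' : Hom b d) x (u u' : Hom d x) :
  is_pushout i f i' f' -> comp u f' = comp u' f' -> comp u i' = comp u' i' ->
  u = u'.
Proof.
move=> [sq po] uf' ui'.
have [h [_ hU]] : exists! h, comp h f' = comp u f' /\ comp h i' = comp u i'.
  by apply: po; rewrite -!compA sq.
by rewrite -(hU u) // (hU u').
Qed.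

End Preadditive.

Section ExactStructure.
Variables (C : PreaddCat) (E : conflations C).
Hypothesis exE : exact_structure E.
Implicit Types a b c d x z : Ob C.

Lemma conflation_iso x' x x'' (i : Hom x' x) (p : Hom x x'') y' y y''
    (j : Hom y' y) (q : Hom y y'') (u : Hom x' y') (v : Hom x y) (w : Hom x'' y'') :
  E i p -> is_iso u -> is_iso v -> is_iso w ->
  comp v i = comp j u -> comp w p = comp q v -> E j q.
Proof. by case: exE => _ H _ _ _; apply: H. Qed.

(* Split sequences are conflations: pushing the conflation k -j-> b -1-> b
   (where j = 0) out along 0 : k -> a gives a conflation a -> d -> c, and
   d ≅ z, c ≅ b. *)
Lemma biprod_conflation a b z (i1 : Hom a z) (i2 : Hom b z)
    (p1 : Hom z a) (p2 : Hom z b) :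
  comp p1 i1 = idm a -> comp p2 i2 = idm b -> comp p1 i2 = 0 ->
  comp p2 i1 = 0 -> comp i1 p1 + comp i2 p2 = idm z -> E i1 p2.
Proof.
move=> p1i1 p2i2 p1i2 p2i1 split_z.
case: exE => kc _ [_ epi_idm] _ [pushout _].
have [k [j Ej]] := epi_idm b.
have j0 : j = 0 by rewrite -(kc _ _ _ _ _ Ej).1.1 comp1m.
have j_mono : adm_mono E j by exists b, (idm b).
have [d [i' [f' [po [c [q Eq]]]]]] := pushout _ _ j j_mono a 0.
have [qi' cokq] := (kc _ _ _ _ _ Eq).2.
have [v [[vf' vi'] _]] : exists! v, comp v f' = i2 /\ comp v i' = i1.
  by apply: po.2; rewrite j0 !compm0.
pose v' := comp i' p1 + comp f' p2.
have vv' : comp v v' = idm z by rewrite compDr !compA vf' vi'.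
have v'v : comp v' v = idm d.
  apply: (pushout_ext po).
  - by rewrite comp1m -compA vf' compDl -!compA p1i2 p2i2 compm0 compm1 add0r.
  - by rewrite comp1m -compA vi' compDl -!compA p1i1 p2i1 compm0 compm1 addr0.
have [w [wq _]] : exists! w, comp w q = comp p2 v.
  by apply: cokq; rewrite -compA vi'.
have qv' : comp q v' = comp (comp q f') p2.
  by rewrite compDr compA qi' comp0m add0r compA.
have ww' : comp w (comp q f') = idm b by rewrite compA wq -compA vf'.
have w'w : comp (comp q f') w = idm c.
  apply: (cokernel_ext (kc _ _ _ _ _ Eq).2).
  by rewrite comp1m -compA wq compA -qv' -compA v'v compm1.
apply: (conflation_iso (v := v) (w := w) Eq (is_iso_idm a)) => //.
- by exists v'.
- by exists (comp q f').
- by rewrite vi' compm1.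
Qed.

Lemma thick_iso_obj D a b : thick E D -> iso_obj a b -> D b -> D a.
Proof.
move=> thD [f [g [gf fg]]] Db.
case: exE => _ _ [mono_idm _] _ _.
have [c [p Ep]] := mono_idm a.
have Ef : E f (comp p g).
  apply: (conflation_iso (v := f) Ep (is_iso_idm a) _ (is_iso_idm c)) => //.
  - by exists g.
  - by rewrite comp1m -compA gf compm1.
by have [] := (thD _ _ _ _ _ Ef).1 Db.
Qed.

Lemma thick_biprod D a b z : thick E D -> is_biprod a b z -> (D z <-> D a /\ D b).
Proof.
move=> thD [i1 [i2 [p1 [p2 [p1i1 p2i2 p1i2 p2i1 split_z]]]]].
exact: thD _ _ _ _ _ (biprod_conflation p1i1 p2i2 p1i2 p2i1 split_z).
Qed.

Lemma thick_forall (J : Type) (P : J -> Prop) (F : J -> Ob C -> Prop) :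
  (forall j, P j -> thick E (F j)) -> thick E (fun x => forall j, P j -> F j x).
Proof.
move=> thF x' x x'' i p Eip; split.
- by move=> Fx; split=> j Pj; have [] := (thF j Pj _ _ _ _ _ Eip).1 (Fx j Pj).
- case=> Fx' Fx'' j Pj; apply/(thF j Pj _ _ _ _ _ Eip).
  by split; [apply: Fx' | apply: Fx''].
Qed.

End ExactStructure.

Section TensorIsos.
Variables (C : PreaddCat) (T : Tensor C).
Local Notation "a ⊗ b" := (tob T a b) (at level 40, left associativity).
Implicit Types a b c : Ob C.

Lemma tensor_iso_obj a a' b b' :
  iso_obj a a' -> iso_obj b b' -> iso_obj (a ⊗ b) (a' ⊗ b').
Proof.
case=> f [f' [f'f ff']] [g [g' [g'g gg']]].
by exists (tom T f g), (tom T f' g'); rewrite -!tom_comp f'f ff' g'g gg' !tom_id.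
Qed.

Lemma iso_obj_assoc a b c : iso_obj ((a ⊗ b) ⊗ c) (a ⊗ (b ⊗ c)).
Proof. by exists (assoc T a b c); apply: assoc_iso. Qed.

Variable E : conflations C.
Hypothesis exT : tensor_exact T E.

Lemma thick_tensorl_preim (D : Ob C -> Prop) x :
  thick E D -> thick E (fun w => D (x ⊗ w)).
Proof. by move=> thD x' y x'' i p /exT/(_ x) [_ /thD]. Qed.

Lemma thick_tensorr_preim (D : Ob C -> Prop) y :
  thick E D -> thick E (fun w => D (w ⊗ y)).
Proof. by move=> thD x' x x'' i p /exT/(_ y) [/thD]. Qed.

End TensorIsos.

Lemma incl_antisym (C : PreaddCat) (D1 D2 : Ob C -> Prop) :
  incl D1 D2 -> incl D2 D1 -> D1 = D2.
Proof.
move=> D12 D21; apply: functional_extensionality => x.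
by apply: propositional_extensionality; split; [apply: D12 | apply: D21].
Qed.

Section ThickTensorIdeals.
Variables (C : PreaddCat) (E : conflations C) (T : Tensor C).
Hypotheses (addC : additive C) (exE : exact_structure E)
  (exT : tensor_exact T E).
Local Notation "a ⊗ b" := (tob T a b) (at level 40, left associativity).
Local Notation ttI := (thick_tensor_ideal T E).
Local Notation gen := (gen T E).
Local Notation tprod := (tprod T E).
Implicit Types (x y z : Ob C) (D I : Ob C -> Prop) (A : (Ob C -> Prop) -> Prop).

Lemma ttI_thick D : ttI D -> thick E D.
Proof. by case. Qed.

Lemma ttI_iso D x y : ttI D -> iso_obj x y -> D y -> D x.
Proof. by case=> thD _; apply: (thick_iso_obj exE). Qed.

Lemma ttI_zero D z : ttI D -> is_zero z -> D z.
Proof.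
move=> ttiD z0; have [_ [[[z' [z'0 Dz']] _] _]] := ttiD.
exact: (ttI_iso ttiD (iso_obj_zero z0 z'0) Dz').
Qed.

Lemma ttI_biprod D x y z : ttI D -> is_biprod x y z -> D x -> D y -> D z.
Proof. by case=> thD _ xyz Dx Dy; apply/(thick_biprod exE thD xyz). Qed.

Lemma ttI_tensorl D x y : ttI D -> D y -> D (x ⊗ y).
Proof. by case=> _ [_ tD] Dy; apply: tD; right. Qed.

Lemma ttI_tensorr D x y : ttI D -> D x -> D (x ⊗ y).
Proof. by case=> _ [_ tD] Dx; apply: tD; left. Qed.

Lemma ttI_intro D :
  thick E D -> (exists z, is_zero z /\ D z) ->
  (forall x y, D x -> D (x ⊗ y)) -> (forall x y, D y -> D (x ⊗ y)) -> ttI D.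
Proof.
move=> thD zD tDr tDl; do !split=> //.
- by move=> x y z Dx Dy xyz; apply/(thick_biprod exE thD xyz).
- by move=> x y [Dx | Dy]; [apply: tDr | apply: tDl].
Qed.

Lemma ttI_top : ttI (fun _ => True).
Proof.
apply: ttI_intro => //; have [[z z0] _] := addC.
by exists z.
Qed.

Lemma gen_sub D0 : incl D0 (gen D0).
Proof. by move=> x D0x D _; apply. Qed.

Lemma gen_min D0 D : ttI D -> incl D0 D -> incl (gen D0) D.
Proof. by move=> ttiD D0D x; apply. Qed.

Lemma gen_ttI D0 : ttI (gen D0).
Proof.
apply: ttI_intro.
- move=> x' x x'' i p Eip; split.
  + by move=> genx; split=> D ttiD D0D;
      have [] := (ttI_thick ttiD Eip).1 (genx D ttiD D0D).
  + by case=> genx' genx'' D ttiD D0D;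
      apply/(ttI_thick ttiD Eip); split; [apply: genx' | apply: genx''].
- have [[z z0] _] := addC; exists z; split=> // D ttiD _.
  exact: ttI_zero.
- move=> x y genx D ttiD D0D; exact: (ttI_tensorr y ttiD (genx D ttiD D0D)).
- move=> x y geny D ttiD D0D; exact: (ttI_tensorl x ttiD (geny D ttiD D0D)).
Qed.

Lemma gen_mono D1 D2 : incl D1 D2 -> incl (gen D1) (gen D2).
Proof. by move=> D12; apply: (gen_min (gen_ttI _)) => x /D12/gen_sub. Qed.

Lemma fincoprod_min (S : Ob C -> Prop) D :
  ttI D -> incl S D -> incl (fincoprod S) D.
Proof.
move=> ttiD SD x; elim=> [z z0 | a b z Sa _ Db abz]; first exact: ttI_zero.
exact: (ttI_biprod ttiD abz (SD _ Sa) Db).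
Qed.

Lemma fincoprod_single (S : Ob C -> Prop) x : S x -> fincoprod S x.
Proof.
have [[z z0] _] := addC => Sx.
exact: (fc_sum Sx (fc_zero S z0) (is_biprod_zero x z0)).
Qed.

Lemma tprod_ttI D1 D2 : ttI (tprod D1 D2).
Proof. exact: gen_ttI. Qed.

Lemma tensor_in_tprod D1 D2 x y : D1 x -> D2 y -> tprod D1 D2 (x ⊗ y).
Proof.
move=> D1x D2y; apply: gen_sub; apply: fincoprod_single.
by exists x, y; split=> //; apply: iso_obj_refl.
Qed.

Lemma tprod_min D1 D2 D : ttI D ->
  (forall x y, D1 x -> D2 y -> D (x ⊗ y)) -> incl (tprod D1 D2) D.
Proof.
move=> ttiD D12D; apply: (gen_min ttiD); apply: (fincoprod_min ttiD).
by move=> w [x [y [D1x D2y wxy]]]; apply: (ttI_iso ttiD wxy (D12D _ _ D1x D2y)).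
Qed.

Lemma tprod_mono D1 D2 D1' D2' :
  incl D1 D1' -> incl D2 D2' -> incl (tprod D1 D2) (tprod D1' D2').
Proof.
move=> D11' D22'; apply: (tprod_min (tprod_ttI _ _)) => x y /D11' D1x /D22' D2y.
exact: tensor_in_tprod.
Qed.

Definition rquot I (A : Ob C -> Prop) : Ob C -> Prop :=
  fun x => forall y, A y -> I (x ⊗ y).
Definition lquot I (A : Ob C -> Prop) : Ob C -> Prop :=
  fun y => forall x, A x -> I (x ⊗ y).

Lemma rquot_ttI I (A : Ob C -> Prop) :
  ttI I -> (forall u v, A v -> A (u ⊗ v)) -> ttI (rquot I A).
Proof.
move=> ttiI tA; have [_ [[[z [z0 Iz]] _] _]] := ttiI.
apply: ttI_intro.
- by apply: thick_forall => y _; apply/thick_tensorr_preim/ttI_thick.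
- by exists z; split=> // y _; apply: ttI_tensorr.
- move=> x w Ix y Ay.
  exact: (ttI_iso ttiI (iso_obj_assoc T x w y) (Ix _ (tA w y Ay))).
- move=> w x Ix y Ay.
  exact: (ttI_iso ttiI (iso_obj_assoc T w x y) (ttI_tensorl w ttiI (Ix y Ay))).
Qed.

Lemma lquot_ttI I (A : Ob C -> Prop) :
  ttI I -> (forall u v, A u -> A (u ⊗ v)) -> ttI (lquot I A).
Proof.
move=> ttiI tA; have [_ [[[z [z0 Iz]] _] _]] := ttiI.
apply: ttI_intro.
- by apply: thick_forall => x _; apply/thick_tensorl_preim/ttI_thick.
- by exists z; split=> // x _; apply: ttI_tensorl.
- move=> y w Iy x Ax.
  apply: (ttI_iso ttiI (iso_obj_sym (iso_obj_assoc T x y w))).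
  exact: (ttI_tensorr w ttiI (Iy x Ax)).
- move=> w y Iy x Ax.
  apply: (ttI_iso ttiI (iso_obj_sym (iso_obj_assoc T x w y))).
  exact: (Iy _ (tA x w Ax)).
Qed.

Lemma tprod_assoc D1 D2 D3 : ttI D1 -> ttI D3 ->
  tprod (tprod D1 D2) D3 = tprod D1 (tprod D2 D3).
Proof.
move=> ttiD1 ttiD3; apply: incl_antisym.
- have tt123 := tprod_ttI D1 (tprod D2 D3).
  apply: (tprod_min tt123) => x z D12x D3z.
  suff D12_sub : incl (tprod D1 D2) (rquot (tprod D1 (tprod D2 D3)) D3).
    exact: (D12_sub x D12x z D3z).
  apply: (tprod_min (rquot_ttI tt123 (fun u v => ttI_tensorl u ttiD3))).
  move=> x1 y1 D1x1 D2y1 z1 D3z1.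
  exact: (ttI_iso tt123 (iso_obj_assoc T x1 y1 z1)
                   (tensor_in_tprod D1x1 (tensor_in_tprod D2y1 D3z1))).
- have tt123 := tprod_ttI (tprod D1 D2) D3.
  apply: (tprod_min tt123) => x y D1x D23y.
  suff D23_sub : incl (tprod D2 D3) (lquot (tprod (tprod D1 D2) D3) D1).
    exact: (D23_sub y D23y x D1x).
  apply: (tprod_min (lquot_ttI tt123 (fun u v => ttI_tensorr v ttiD1))).
  move=> y1 z1 D2y1 D3z1 x1 D1x1.
  exact: (ttI_iso tt123 (iso_obj_sym (iso_obj_assoc T x1 y1 z1))
                   (tensor_in_tprod (tensor_in_tprod D1x1 D2y1) D3z1)).
Qed.

Definition ttI_join (A : (Ob C -> Prop) -> Prop) : Ob C -> Prop :=
  gen (fun x => exists2 D, A D & D x).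

Lemma ttI_join_sup A : is_sup_in ttI (@incl C) A (ttI_join A).
Proof.
split; first exact: gen_ttI.
- by move=> D AD x Dx; apply: gen_sub; exists D.
- by move=> U ttiU AU; apply: (gen_min ttiU) => x [D AD]; apply: AU.
Qed.

Lemma tprod_joinr D1 D2 D3 J : ttI D1 ->
  is_sup_in ttI (@incl C) (fun D => D = D2 \/ D = D3) J ->
  is_sup_in ttI (@incl C) (fun D => D = tprod D1 D2 \/ D = tprod D1 D3) (tprod D1 J).
Proof.
move=> ttiD1 [_ J_ub J_lub]; split; first exact: tprod_ttI.
- by move=> D [->|->]; apply: tprod_mono => //; apply: J_ub; [left | right].
- move=> U ttiU U_ub; apply: (tprod_min ttiU) => x y D1x Jy.
  suff J_sub : incl J (lquot U D1) by exact: J_sub y Jy x D1x.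
  apply: J_lub (lquot_ttI ttiU (fun u v => ttI_tensorr v ttiD1)) _.
  move=> D D23 z Dz x' D1x'.
  apply: (U_ub (tprod D1 D)); last exact: tensor_in_tprod.
  by case: D23 => ->; [left | right].
Qed.

Lemma tprod_joinl D1 D2 D3 J : ttI D1 ->
  is_sup_in ttI (@incl C) (fun D => D = D2 \/ D = D3) J ->
  is_sup_in ttI (@incl C) (fun D => D = tprod D2 D1 \/ D = tprod D3 D1) (tprod J D1).
Proof.
move=> ttiD1 [_ J_ub J_lub]; split; first exact: tprod_ttI.
- by move=> D [->|->]; apply: tprod_mono => //; apply: J_ub; [left | right].
- move=> U ttiU U_ub; apply: (tprod_min ttiU) => x y Jx D1y.
  suff J_sub : incl J (rquot U D1) by exact: J_sub x Jx y D1y.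
  apply: J_lub (rquot_ttI ttiU (fun u v => ttI_tensorl u ttiD1)) _.
  move=> D D23 z Dz y' D1y'.
  apply: (U_ub (tprod D D1)); last exact: tensor_in_tprod.
  by case: D23 => ->; [left | right].
Qed.

Definition principal x : Ob C -> Prop := gen (fun y => y = x).

Lemma principal_in x : principal x x.
Proof. exact: gen_sub. Qed.
(* [principal x x] unfolds to a product, which would make [x] implicit. *)
Arguments principal_in : clear implicits.

Lemma principal_min D x : ttI D -> D x -> incl (principal x) D.
Proof. by move=> ttiD Dx; apply: (gen_min ttiD) => y ->. Qed.

Lemma principal_biprod x y w : is_biprod x y w ->
  incl (principal x) (principal w) /\ incl (principal y) (principal w).
Proof.
move=> xyw; have thw := ttI_thick (gen_ttI (fun z => z = w)).
have [wx wy] := (thick_biprod exE thw xyw).1 (principal_in w).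
by split; apply: principal_min (gen_ttI _) _.
Qed.

Lemma ttI_finite_joins A :
  ttI (fun y => exists2 l, (forall D, In D l -> A D) & ttI_join (fun D => In D l) y).
Proof.
have join_app l1 l2 :
    incl (ttI_join (fun D => In D l1)) (ttI_join (fun D => In D (l1 ++ l2))) /\
    incl (ttI_join (fun D => In D l2)) (ttI_join (fun D => In D (l1 ++ l2))).
  by split; apply: gen_mono => z [D lD Dz]; exists D => //;
    apply: in_or_app; [left | right].
apply: ttI_intro.
- move=> x' x x'' i p Eip.
  have thJ l := ttI_thick (gen_ttI (fun z => exists2 D, In D l & D z)) Eip.
  split.
  + by case=> l Al /(thJ l) [Jx' Jx'']; split; exists l.
  + case=> [[l1 Al1 Jx'] [l2 Al2 Jx'']]; exists (l1 ++ l2).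
      by move=> D lD; case: (in_app_or _ _ _ lD); [apply: Al1 | apply: Al2].
    by apply/thJ; split; [apply: (join_app l1 l2).1 | apply: (join_app l1 l2).2].
- have [[z z0] _] := addC; exists z; split=> //; exists nil => //.
  exact: ttI_zero (gen_ttI _) z0.
- by move=> x y [l Al Jx]; exists l => //; apply: ttI_tensorr (gen_ttI _) Jx.
- by move=> x y [l Al Jy]; exists l => //; apply: ttI_tensorl (gen_ttI _) Jy.
Qed.

Lemma principal_compact x : compact_in ttI (@incl C) (principal x).
Proof.
split; first exact: gen_ttI.
move=> A S _ [_ S_ub S_lub] xS.
have [l Al Jx] : exists2 l, (forall D, In D l -> A D) & ttI_join (fun D => In D l) x.
  apply: (S_lub _ (ttI_finite_joins A)) (xS x (principal_in x)).
  move=> D AD y Dy; exists [:: D]; first by move=> D' [<-|[]].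
  by apply: gen_sub; exists D => //; left.
exists l; split=> //; exists (ttI_join (fun D => In D l)).
by split; [exact: ttI_join_sup | exact: principal_min (gen_ttI _) Jx].
Qed.

Lemma principal_list_bound D l : ttI D ->
  (forall I, In I l -> exists2 y, D y & I = principal y) ->
  exists2 x, D x & forall I, In I l -> incl I (principal x).
Proof.
move=> ttiD; elim: l => [|I l IHl] lD.
  by have [[z z0] _] := addC; exists z => //; exact: ttI_zero ttiD z0.
have [x Dx lx] := IHl (fun I' lI' => lD I' (or_intror lI')).
have [y Dy ->] := lD I (or_introl erefl).
have [_ /(_ y x) [w yxw]] := addC.
have [yw xw] := principal_biprod yxw.
exists w; first exact: ttI_biprod ttiD yxw Dy Dx.
move=> I' [<- | lI']; first exact: yw.
by move=> z /(lx I' lI') /xw.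
Qed.

Lemma compact_principal D :
  compact_in ttI (@incl C) D -> exists x, D = principal x.
Proof.
case=> ttiD D_compact.
pose A I := exists2 y, D y & I = principal y.
have A_sup : is_sup_in ttI (@incl C) A D.
  split=> //; first by move=> I [y Dy ->]; apply: principal_min.
  move=> U _ AU y Dy.
  by apply: (AU (principal y)); [exists y | exact: principal_in].
have A_ttI I : A I -> ttI I by case=> y _ ->; apply: gen_ttI.
have [l [lA [S [[_ _ S_lub] DS]]]] := D_compact A D A_ttI A_sup (fun x Dx => Dx).
have [x Dx lx] := principal_list_bound ttiD lA.
exists x; apply: incl_antisym; last exact: principal_min.
by move=> y /DS; apply: (S_lub _ (gen_ttI _) lx).
Qed.

Lemma compact_ttIP D :
  compact_in ttI (@incl C) D <-> exists x, D = principal x.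
Proof.
split; first exact: compact_principal.
by case=> x ->; apply: principal_compact.
Qed.

Lemma ttI_sup_compact D : ttI D ->
  is_sup_in ttI (@incl C) (fun I => compact_in ttI (@incl C) I /\ incl I D) D.
Proof.
move=> ttiD; split=> //; first by move=> I [].
move=> U _ U_ub x Dx; apply: (U_ub (principal x)); last exact: principal_in.
by split; [apply: principal_compact | apply: principal_min].
Qed.

Variable e : Ob C.
Hypothesis unit_e : tensor_unit T e.

Lemma iso_obj_unitl y : iso_obj y (e ⊗ y).
Proof.
by have [lu [_ [[lu_iso _] _ _ _]]] := unit_e; apply/iso_obj_sym; exists (lu y).
Qed.

Lemma iso_obj_unitr y : iso_obj y (y ⊗ e).
Proof.
by have [_ [ru [[_ ru_iso] _ _ _]]] := unit_e; apply/iso_obj_sym; exists (ru y).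
Qed.

Lemma principal_unit : principal e = (fun _ => True).
Proof.
apply: incl_antisym => // y _.
apply: (ttI_iso (gen_ttI _) (iso_obj_unitl y)).
exact: ttI_tensorr y (gen_ttI _) (principal_in e).
Qed.

Lemma tprod_topl D : ttI D -> tprod (fun _ => True) D = D.
Proof.
move=> ttiD; apply: incl_antisym.
  by apply: (tprod_min ttiD) => x y _; apply: ttI_tensorl.
move=> y Dy; apply: (ttI_iso (tprod_ttI _ _) (iso_obj_unitl y)).
exact: tensor_in_tprod.
Qed.

Lemma tprod_topr D : ttI D -> tprod D (fun _ => True) = D.
Proof.
move=> ttiD; apply: incl_antisym.
  by apply: (tprod_min ttiD) => x y Dx _; apply: ttI_tensorr.
move=> y Dy; apply: (ttI_iso (tprod_ttI _ _) (iso_obj_unitr y)).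
exact: tensor_in_tprod.
Qed.

(* Two quotients of I reduce x1 ⊗ y1, for x1 ∈ <x> and y1 ∈ <y>, first to
   x1 ⊗ y ≅ x1 ⊗ (e ⊗ y) and then to x ⊗ (w ⊗ y). *)
Lemma tprod_principal_min x y I : ttI I ->
  (forall w, I (x ⊗ (w ⊗ y))) -> incl (tprod (principal x) (principal y)) I.
Proof.
move=> ttiI xwy.
pose Ty v := exists w, iso_obj v (w ⊗ y).
have Ty_tensorl u v : Ty v -> Ty (u ⊗ v).
  case=> w vw; exists (u ⊗ w).
  apply: (iso_obj_trans (tensor_iso_obj T (iso_obj_refl u) vw)).
  exact: iso_obj_sym (iso_obj_assoc T u w y).
have x_quot : incl (principal x) (rquot I Ty).
  apply: (principal_min (rquot_ttI ttiI Ty_tensorl)) => v [w vw].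
  exact: (ttI_iso ttiI (tensor_iso_obj T (iso_obj_refl x) vw) (xwy w)).
have y_quot : incl (principal y) (lquot I (principal x)).
  apply: (principal_min (lquot_ttI ttiI (fun u v => ttI_tensorr v (gen_ttI _)))).
  by move=> x1 /x_quot; apply; exists e; apply: iso_obj_unitl.
by apply: (tprod_min ttiI) => x1 y1 /[swap] /y_quot; apply.
Qed.

Lemma tprod_principal_eq x y g : tprod (principal x) (principal y) g ->
  (forall w, principal g (x ⊗ (w ⊗ y))) ->
  tprod (principal x) (principal y) = principal g.
Proof.
move=> xy_g xwy; apply: incl_antisym.
  exact: (tprod_principal_min (gen_ttI _)).
exact: (principal_min (tprod_ttI _ _)).
Qed.

Lemma tprod_principal_comm x y : tensor_commutative T ->
  tprod (principal x) (principal y) = principal (x ⊗ y).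
Proof.
case=> sym [sym_iso _]; apply: tprod_principal_eq.
  exact: tensor_in_tprod (principal_in x) (principal_in y).
move=> w; have xy_w := ttI_tensorr w (gen_ttI _) (principal_in (x ⊗ y)).
apply: (ttI_iso (gen_ttI _) _ xy_w).
apply: (iso_obj_trans (tensor_iso_obj T (iso_obj_refl x) _)).
  by exists (sym w y).
exact: iso_obj_sym (iso_obj_assoc T x y w).
Qed.

Lemma tprod_principal_gen x y c :
  (forall D, thick E D -> D c -> forall z, D z) ->
  tprod (principal x) (principal y) = principal (x ⊗ (c ⊗ y)).
Proof.
move=> c_gen; apply: tprod_principal_eq.
  exact: (tensor_in_tprod (principal_in x)
                          (ttI_tensorl c (gen_ttI _) (principal_in y))).
apply: (c_gen (fun w => principal (x ⊗ (c ⊗ y)) (x ⊗ (w ⊗ y)))).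
  exact: (thick_tensorr_preim exT y
           (thick_tensorl_preim exT x (ttI_thick (gen_ttI _)))).
exact: principal_in.
Qed.

Hypothesis comm_or_gen :
  tensor_commutative T \/ exists c, forall D, thick E D -> D c -> forall z, D z.

Lemma compact_tprod D1 D2 :
  compact_in ttI (@incl C) D1 -> compact_in ttI (@incl C) D2 ->
  compact_in ttI (@incl C) (tprod D1 D2).
Proof.
move=> /compact_principal [x ->] /compact_principal [y ->].
case: comm_or_gen => [comm | [c c_gen]].
- by rewrite tprod_principal_comm //; apply: principal_compact.
- by rewrite (tprod_principal_gen _ _ c_gen); apply: principal_compact.
Qed.

Lemma ttI_ideal_lattice : ideal_lattice_on ttI (@incl C) tprod.
Proof.
split; [split | split; [split | split; [| split; [| split; [| split]]]]].
- by move=> D1 D2 _ _; apply: tprod_ttI.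
- by move=> D1 D2 D3 ttiD1 _ ttiD3; apply: tprod_assoc.
- by move=> D _ x.
- by move=> D1 D2 D3 _ _ _ D12 D23 x /D12/D23.
- by move=> D1 D2 _ _; apply: incl_antisym.
- by move=> A _; exists (ttI_join A); apply: ttI_join_sup.
- exact: ttI_sup_compact.
- move=> D1 D2 D3 J ttiD1 _ _ supJ.
  by split; [apply: tprod_joinr | apply: tprod_joinl].
- exists (fun _ => True); split.
  + by split=> [|//|U _ U_ub]; [apply: ttI_top | apply: U_ub ttI_top].
  + by rewrite -principal_unit; apply: principal_compact.
  + by move=> D ttiD; rewrite tprod_topl ?tprod_topr.
- exact: compact_tprod.
Qed.

End ThickTensorIdeals.

Theorem mainTheorem13 (C : PreaddCat) (E : conflations C) (T : Tensor C)
    (e : Ob C) :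
  additive C ->
  exact_structure E ->
  tensor_exact T E ->
  tensor_unit T e ->
  (tensor_commutative T \/
   exists c : Ob C, forall D : Ob C -> Prop, thick E D -> D c -> forall x, D x) ->
  ideal_lattice_on (thick_tensor_ideal T E) (@incl C) (tprod T E) /\
  (forall D : Ob C -> Prop, thick_tensor_ideal T E D ->
     (compact_in (thick_tensor_ideal T E) (@incl C) D <->
      exists x : Ob C, D = gen T E (fun y => y = x))).
Proof.
move=> addC exE exT unit_e comm_or_gen; split.
- exact: ttI_ideal_lattice unit_e comm_or_gen.
- by move=> D _; apply: compact_ttIP.
Qed.
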